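(* Run the mechanism BFM-VM described in the context with $\ell=2$ and arbitrary $B>0$, $\alpha>1$, with all sellers behaving truthfully, and let $O$ be an optimal solution of $\max\{v(S): S\subseteq\mathcal{N},\ c(S)\le B\}$. Then $$v(O)\ \le\ 2\rho_M+2\sum_{i=1}^{2}\sum_{t=1}^{M}v(S_{i,t}).$$
   Context: Setting. $\mathcal{N}$ is a finite set of $n$ sellers. The valuation $v:2^{\mathcal{N}}\to\mathbb{R}_{\ge 0}$ satisfies $v(\emptyset)=0$ and is submodular (for $X\subseteq Y\subseteq\mathcal{N}$ and $u\notin Y$, $v(u\mid Y)\le v(u\mid X)$), not necessarily monotone, where $v(S\mid T)=v(S\cup T)-v(T)$, $v(u\mid T)=v(\{u\}\mid T)$, $v(u)=v(\{u\})$. Each seller $u$ has a private cost $c(u)\ge 0$; $c(X)=\sum_{u\in X}c(u)$. $B>0$ is the budget, $[\ell]=\{1,\dots,\ell\}$. Sellers behave truthfully: a seller $u$ offered price $q$ accepts iff $c(u)\le q$. Mechanism BFM-VM (inputs $B$, $\alpha>1$, $\ell\in\{1,2\}$): 1. Offer every seller the price $B$; let $R$ be the set of sellers who accept, and set $p(u)=B$ for $u\in R$. 2. Set $t=1$, $\rho_1=\max_{u\in R}v(u)$, $S_{1,1}=\{u_0\}$ for some $u_0\in\arg\max_{u\in R}v(u)$, and (if $\ell=2$) $S_{2,1}=\emptyset$. 3. Repeat rounds: set $t\leftarrow t+1$, $\rho_t=\alpha\rho_{t-1}$, $S_{i,t}=\emptyset$ for $i\in[\ell]$. Process the sellers $u\in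 R\setminus\bigcup_{i=1}^{\ell}S_{i,t-1}$ one at a time in a fixed order. For each such $u$: pick $j\in\arg\max_{i\in[\ell]}v(u\mid S_{i,t})$ (current contents); update $p(u)\leftarrow\min\{p(u),\ v(u\mid S_{j,t})/(\rho_t/B)\}$ and offer $p(u)$ to $u$. If $u$ accepts: if $v(S_{j,t}\cup\{u\})>\rho_t$, end the round immediately; otherwise add $u$ to $S_{j,t}$. If $u$ rejects, remove $u$ from $R$. After the round, stop if $R\setminus\bigcup_{i=1}^{\ell}(S_{i,t-1}\cup S_{i,t})=\emptyset$; otherwise start another round. 4. Let $M$ be the final value of $t$. Output $S^*\in\arg\max_{A\in\{S_{i,t}: i\in[\ell],\ t\in\{M-1,M\}\}}v(A)$, paying each $u\in S^*$ its current price $p(u)$. Notation: $S_{i,t}$ denotes the contents of that candidate set at the end of round $t$; $\rho_M$ is the threshold of the last round. *)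

From HB Require Import structures.
From mathcomp Require Import all_boot all_order all_algebra.
Set Implicit Arguments. Unset Strict Implicit. Unset Printing Implicit Defensive.
Import Order.TTheory GRing.Theory Num.Theory.
Local Open Scope ring_scope.

Definition marg (T : finType) (R : realFieldType) (v : {set T} -> R)
  (u : T) (S : {set T}) : R := v (u |: S) - v S.

Definition submodular (T : finType) (R : realFieldType) (v : {set T} -> R) :=
  forall (X Y : {set T}) (u : T), X \subset Y -> u \notin Y ->
    marg v u Y <= marg v u X.

Definition cost (T : finType) (R : realFieldType) (c : T -> R) (X : {set T}) : R :=
  \sum_(u in X) c u.

(* A tie-breaking rule for step 3: [sel t u S1 S2 = true] means j = 1,
   [false] means j = 2; it must pick an index maximizing v(u | S_i). *)
Definition argmax_selector (T : finType) (R : realFieldType) (v : {set T} -> R)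
  (sel : nat -> T -> {set T} -> {set T} -> bool) :=
  forall t u S1 S2,
    if sel t u S1 S2 then marg v u S2 <= marg v u S1
    else marg v u S1 <= marg v u S2.

(* State of the mechanism: (R, p, S_{1,t}, S_{2,t}). *)
Definition mstate (T : finType) (R : realFieldType) :=
  ({set T} * (T -> R) * {set T} * {set T})%type.

(* Processing (part of) a round t with threshold rho over the list l of
   sellers, in order, for l = 2 candidate sets.  Sellers are truthful:
   u accepts price q iff c u <= q. *)
Fixpoint proc (T : finType) (R : realFieldType) (v : {set T} -> R) (c : T -> R)
  (B : R) (sel : nat -> T -> {set T} -> {set T} -> bool) (t : nat) (rho : R)
  (l : seq T) (st : mstate T R) : mstate T R :=
  match l with
  | [::] => st
  | u :: l' =>
    let: (Rs, p, S1, S2) := st in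
    let j1 := sel t u S1 S2 in
    let Sj := if j1 then S1 else S2 in
    let q := Num.min (p u) (marg v u Sj / (rho / B)) in
    let p' := fun w => if w == u then q else p w in
    if c u <= q then
      if rho < v (u |: Sj) then (Rs, p', S1, S2)
      else proc v c B sel t rho l'
             (Rs, p', (if j1 then u |: S1 else S1), (if j1 then S2 else u |: S2))
    else proc v c B sel t rho l' (Rs :\ u, p', S1, S2)
  end.

(* [bfm_run ... M Rs ps S1 S2 rho] : the sequences (indexed by the round t)
   describe an execution of BFM-VM with l = 2 that stops after round M.
   Rs t, ps t, S1 t, S2 t are the values at the end of round t
   (t = 1 corresponds to the state after steps 1-2). *)
Definition bfm_run (T : finType) (R : realFieldType) (v : {set T} -> R)
  (c : T -> R) (B alpha : R) (ord : seq T)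
  (sel : nat -> T -> {set T} -> {set T} -> bool) (u0 : T) (M : nat)
  (Rs : nat -> {set T}) (ps : nat -> T -> R) (S1 S2 : nat -> {set T})
  (rho : nat -> R) : Prop :=
  [/\ Rs 1%N = [set u | c u <= B], ps 1%N = (fun _ => B),
      u0 \in Rs 1%N & (forall u, u \in Rs 1%N -> v [set u] <= v [set u0])] /\
  [/\ rho 1%N = v [set u0], S1 1%N = [set u0] & S2 1%N = set0 ] /\
  [/\
      (2 <= M)%N,
      (forall t, (2 <= t <= M)%N -> rho t = alpha * rho t.-1),
      (forall t, (2 <= t <= M)%N ->
          (Rs t, ps t, S1 t, S2 t) =
          proc v c B sel t (rho t)
            [seq u <- ord | u \in Rs t.-1 :\: (S1 t.-1 :|: S2 t.-1)]
            (Rs t.-1, ps t.-1, set0, set0)),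
      (forall t, (2 <= t < M)%N ->
          Rs t :\: (S1 t.-1 :|: S2 t.-1 :|: S1 t :|: S2 t) != set0) &
      Rs M :\: (S1 M.-1 :|: S2 M.-1 :|: S1 M :|: S2 M) = set0 ].

From HB Require Import structures.
From mathcomp Require Import all_boot all_order all_algebra.
From mathcomp Require Import ring lra zify.
Import Order.TTheory GRing.Theory Num.Theory.
Set Implicit Arguments. Unset Strict Implicit. Unset Printing Implicit Defensive.
Local Open Scope ring_scope.

(* In round t the two candidate sets S_1, S_2 stay disjoint, and every seller
   rejected during the round has marginal value at most c(u) rho_t / B with
   respect to both final sets: having accepted all earlier (higher) prices, it
   refused v(u | S_j) B / rho_t for the set S_j where its marginal value was
   larger, and marginal values only shrink as the sets grow.
   Since a seller joins the set where its marginal value is larger, each set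
   pays for the other: sum_{w in S_2} max(0, v(w | S_1)) <= v(S_2), and
   symmetrically.  Hence the part Q of any P lying among the rejected sellers
   and the candidate sets of round t satisfies
     v(Q) <= v(S_1 u Q) + v(S_2 u Q)
          <= 2 (v(S_1) + v(S_2)) + 2 c(P n rejected) rho_t / B.
   A seller of a feasible O accepts the price B, and is then either rejected
   in some round or kept in a candidate set of one of the last two rounds, so
   subadditivity over the rounds, rho_t <= rho_M and the disjointness of the
   rejected sets (whose total cost in O is at most c(O) <= B) give the bound. *)

Lemma setU1_ind (T : finType) (P : {set T} -> Prop) :
  P set0 -> (forall x (A : {set T}), x \notin A -> P A -> P (x |: A)) ->
  forall A, P A.
Proof.
move=> P0 PU A; rewrite -(set_enum A); elim: (enum A) (enum_uniq A) => [|x s IH].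
  by rewrite set_nil.
by case/andP=> xs us; rewrite set_cons; apply: PU; [rewrite inE | exact: IH].
Qed.

Lemma mem_bigcup_nat (T : finType) (A : nat -> {set T}) m n t x :
  (m <= t < n)%N -> x \in A t -> x \in \bigcup_(m <= i < n) A i.
Proof.
by move=> tmn xA; rewrite (bigD1_seq t) ?mem_index_iota ?iota_uniq //= inE xA.
Qed.

Lemma ler_sum_subset (T : finType) (R : numDomainType) (A B : {set T}) (F : T -> R) :
  A \subset B -> {in B, forall i, 0 <= F i} -> \sum_(i in A) F i <= \sum_(i in B) F i.
Proof.
move=> AB F0; rewrite [leRHS](big_setID A) /= (setIidPr AB) lerDl.
by apply: sumr_ge0 => i; rewrite inE => /andP[_ /F0].
Qed.

Section Submodular.
Variables (T : finType) (R : realFieldType) (v : {set T} -> R).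
Implicit Types (u d : T) (S X Y A B D O Q : {set T}).
Hypothesis v_submod : submodular v.

Lemma marg_mem u S : u \in S -> marg v u S = 0.
Proof. by move=> uS; rewrite /marg (setUidPr _) ?sub1set ?subrr. Qed.

Lemma marg_set_antimono A B D : A \subset B -> [disjoint D & B] ->
  v (B :|: D) - v B <= v (A :|: D) - v A.
Proof.
move=> AB; elim/setU1_ind: D => [|d D dD IH]; first by rewrite !setU0 !subrr.
rewrite disjoints_subset subUset sub1set inE -disjoints_subset => /andP[dB DB].
have: marg v d (B :|: D) <= marg v d (A :|: D).
  by apply: v_submod; [exact: setSU | rewrite inE negb_or dB].
have := IH DB; rewrite /marg (setUCA B) (setUCA A); lra.
Qed.

Lemma submod_setUI X Y : v (X :|: Y) + v (X :&: Y) <= v X + v Y.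
Proof.
have XY : [disjoint Y :\: X & X] by rewrite disjoints_subset setDE subsetIr.
have := marg_set_antimono (subsetIl X Y) XY.
rewrite setIC setID setDE setUIr setUCr setIT; lra.
Qed.

Lemma le_marg_sum X D : v (X :|: D) <= v X + \sum_(y in D) marg v y X.
Proof.
elim/setU1_ind: D => [|d D dD IH]; first by rewrite setU0 big_set0 addr0.
rewrite big_setU1 //= setUCA.
have: marg v d (X :|: D) <= marg v d X.
  have [dX|dX] := boolP (d \in X); first by rewrite !marg_mem // inE dX.
  by apply: v_submod; [exact: subsetUl | rewrite inE negb_or dX].
move: IH; rewrite /marg; lra.
Qed.

Hypothesis v_ge0 : forall S, 0 <= v S.

Lemma submod_subadd X Y : v (X :|: Y) <= v X + v Y.
Proof. by have := submod_setUI X Y; have := v_ge0 (X :&: Y); lra. Qed.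

Lemma submod_le_setU2 Q (S1 S2 : {set T}) : [disjoint S1 & S2] ->
  v Q <= v (S1 :|: Q) + v (S2 :|: Q).
Proof.
move=> /disjoint_setI0 S12; have := submod_setUI (S1 :|: Q) (S2 :|: Q).
rewrite -setUIl S12 set0U; have := v_ge0 (S1 :|: Q :|: (S2 :|: Q)); lra.
Qed.

Hypothesis v0 : v set0 = 0.

Lemma subadd_setI_bigcup (I : Type) (r : seq I) (P : pred I) (A : I -> {set T}) O :
  v (O :&: \bigcup_(i <- r | P i) A i) <= \sum_(i <- r | P i) v (O :&: A i).
Proof.
apply: (big_ind2 (fun X y => v (O :&: X) <= y)) => [|X x Y y hX hY|i _].
- by rewrite setI0 v0.
- by rewrite setIUr; apply: le_trans (submod_subadd _ _) (lerD hX hY).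
- exact: lexx.
Qed.

Lemma value_le_sum_singletons O : v O <= \sum_(u in O) v [set u].
Proof.
rewrite -{1}[O]set0U; apply: le_trans (le_marg_sum _ _) _.
by rewrite v0 add0r; apply: ler_sum => u _; rewrite /marg setU0 v0 subr0.
Qed.

End Submodular.

Section Round.
Variables (T : finType) (R : realFieldType) (v : {set T} -> R) (c : T -> R) (B rho : R).
Implicit Types (u w : T) (P : {set T}) (p : T -> R).
Hypotheses (v_submod : submodular v) (v_ge0 : forall S, 0 <= v S).
Hypotheses (c_ge0 : forall u, 0 <= c u) (B_gt0 : 0 < B) (rho_gt0 : 0 < rho).

Definition cross_gain (S1 S2 : {set T}) := \sum_(w in S2) Num.max 0 (marg v w S1).

Record round_inv (R0 Rc S1 S2 : {set T}) p : Prop := RoundInv {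
  round_disjoint : [disjoint S1 & S2];
  round_chosen : S1 :|: S2 \subset Rc;
  round_remaining : Rc \subset R0;
  round_rejected : {in R0 :\: Rc, forall u,
    marg v u S1 <= c u * rho / B /\ marg v u S2 <= c u * rho / B};
  round_cross12 : cross_gain S1 S2 <= v S2;
  round_cross21 : cross_gain S2 S1 <= v S1;
  round_price : {in Rc, forall u, c u <= p u} }.

Lemma round_inv_sym (R0 Rc S1 S2 : {set T}) p :
  round_inv R0 Rc S1 S2 p -> round_inv R0 Rc S2 S1 p.
Proof.
case=> disj chosen remaining rejected c12 c21 price; split=> //.
- by rewrite disjoint_sym.
- by rewrite setUC.
- by move=> u /rejected [].
Qed.

Lemma round_inv_init (R0 : {set T}) p :
  {in R0, forall u, c u <= p u} -> round_inv R0 R0 set0 set0 p.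
Proof.
move=> price; split=> //.
- by rewrite disjoints_subset sub0set.
- by rewrite setU0 sub0set.
- by move=> u; rewrite setDv inE.
- by rewrite /cross_gain big_set0.
- by rewrite /cross_gain big_set0.
Qed.

Lemma round_inv_reprice (R0 Rc S1 S2 : {set T}) p p' :
  round_inv R0 Rc S1 S2 p -> {in Rc, forall u, c u <= p' u} ->
  round_inv R0 Rc S1 S2 p'.
Proof. by case. Qed.

Lemma round_inv_add (R0 Rc S1 S2 : {set T}) p p' u :
  round_inv R0 Rc S1 S2 p -> u \in Rc -> u \notin S1 :|: S2 ->
  marg v u S2 <= marg v u S1 -> 0 <= marg v u S1 ->
  {in Rc, forall w, c w <= p' w} -> round_inv R0 Rc (u |: S1) S2 p'.
Proof.
case=> disj chosen remaining rejected c12 c21 _ uRc.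
rewrite inE negb_or => /andP[uS1 uS2] le21 ge0 price.
have shrink w : w \notin S1 -> w != u -> marg v w (u |: S1) <= marg v w S1.
  by move=> wS1 wu; apply: v_submod; rewrite ?subsetU1 // !inE negb_or wu.
have outside w : w \notin Rc -> w \notin S1.
  by apply: contra => wS1; apply: (subsetP chosen); rewrite inE wS1.
split=> //.
- by rewrite disjoints_subset subUset sub1set inE uS2 -disjoints_subset.
- by rewrite -setUA subUset sub1set uRc.
- move=> w /[dup] wrej /rejected [h1 h2]; split=> //.
  have wRc : w \notin Rc by move: wrej; rewrite inE => /andP[].
  by apply: le_trans h1; apply: shrink; [exact: outside | apply: contraNneq wRc => ->].
- apply: le_trans c12; apply: ler_sum => w wS2.
  have wu : w != u by apply: contraNneq uS2 => <-.
  have le := shrink w (negbT (disjointFl disj wS2)) wu.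
  by rewrite ge_max le_max lexx /= (le_trans le) // le_max lexx orbT.
- have hmax : Num.max 0 (marg v u S2) <= marg v u S1 by rewrite ge_max ge0 le21.
  rewrite /cross_gain big_setU1 //=; move: c21 hmax; rewrite /cross_gain /marg; lra.
Qed.

Lemma round_inv_reject (R0 Rc S1 S2 : {set T}) p p' u :
  round_inv R0 Rc S1 S2 p -> u \in Rc -> u \notin S1 :|: S2 ->
  marg v u S1 <= c u * rho / B -> marg v u S2 <= c u * rho / B ->
  {in Rc :\ u, forall w, c w <= p' w} -> round_inv R0 (Rc :\ u) S1 S2 p'.
Proof.
case=> disj chosen remaining rejected c12 c21 _ uRc uS le1 le2 price; split=> //.
- apply/subsetP=> w wS; rewrite !inE (subsetP chosen w wS) andbT.
  by apply: contraNneq uS => <-.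
- exact: subset_trans (subD1set Rc u) remaining.
- move=> w; rewrite !inE negb_and negbK => /andP[/orP[/eqP->|wRc] wR0] //.
  by apply: rejected; rewrite inE wRc.
Qed.

Lemma accept_marg_ge0 u pu m : c u <= Num.min pu (m / (rho / B)) -> 0 <= m.
Proof.
rewrite le_min => /andP[_ /(le_trans (c_ge0 u))].
by rewrite ler_pdivlMr ?divr_gt0 // mul0r.
Qed.

Lemma reject_marg_le u pu m :
  c u <= pu -> ~~ (c u <= Num.min pu (m / (rho / B))) -> m <= c u * rho / B.
Proof.
move=> le_pu; rewrite -ltNge gt_min ltNge le_pu /= ltr_pdivrMr ?divr_gt0 //.
by rewrite mulrA => /ltW.
Qed.

Lemma round_inv_step (j : bool) (R0 Rc S1 S2 : {set T}) p u :
  round_inv R0 Rc S1 S2 p -> u \in Rc -> u \notin S1 :|: S2 ->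
  (if j then marg v u S2 <= marg v u S1 else marg v u S1 <= marg v u S2) ->
  let q := Num.min (p u) (marg v u (if j then S1 else S2) / (rho / B)) in
  let p' w := if w == u then q else p w in
  if c u <= q then
    round_inv R0 Rc S1 S2 p' /\
    round_inv R0 Rc (if j then u |: S1 else S1) (if j then S2 else u |: S2) p'
  else round_inv R0 (Rc :\ u) S1 S2 p'.
Proof.
move=> inv uRc uS hsel q p'; case: ifP => [accept|/negbT reject].
  have price : {in Rc, forall w, c w <= p' w}.
    by move=> w wRc; rewrite /p'; case: eqP => [->|_] //; apply: (round_price inv).
  split; first exact: round_inv_reprice inv price.
  move: (accept_marg_ge0 accept) price; rewrite {accept}/p' {}/q.
  case: j hsel => hsel ge0 price; first exact: round_inv_add inv uRc uS hsel ge0 price.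
  by apply/round_inv_sym/(round_inv_add (round_inv_sym inv)); rewrite // setUC.
have le := reject_marg_le (round_price inv uRc) reject.
have [le1 le2] : marg v u S1 <= c u * rho / B /\ marg v u S2 <= c u * rho / B.
  by case: (j) hsel le => hsel le; split=> //; exact: le_trans hsel le.
apply: (round_inv_reject inv uRc uS le1 le2) => w.
by rewrite /p' in_setD1 => /andP[/negbTE -> wRc] /=; apply: (round_price inv).
Qed.

Lemma round_inv_proc sel t l (R0 Rc S1 S2 Rc' S1' S2' : {set T}) p p' :
  argmax_selector v sel -> round_inv R0 Rc S1 S2 p -> uniq l ->
  {subset l <= Rc :\: (S1 :|: S2)} ->
  proc v c B sel t rho l (Rc, p, S1, S2) = (Rc', p', S1', S2') ->
  round_inv R0 Rc' S1' S2' p'.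
Proof.
move=> sel_max; elim: l Rc S1 S2 p => [|u l IH] Rc S1 S2 p inv /=.
  by move=> _ _ [<- <- <- <-].
case/andP=> ul l_uniq l_sub; have /setDP[uRc uS] := l_sub u (mem_head u l).
have l_rest w : w \in l -> [/\ w != u, w \in Rc & w \notin S1 :|: S2].
  move=> wl; have /setDP[wRc wS] : w \in Rc :\: (S1 :|: S2).
    by apply: l_sub; rewrite inE wl orbT.
  by split=> //; apply: contraNneq ul => <-.
move: (round_inv_step inv uRc uS (sel_max t u S1 S2)) => /=.
case: ifP => _ => [[inv_stop inv_add]|inv_reject].
  case: ifP => _; first by case=> <- <- <- <-.
  apply: IH inv_add l_uniq _ => w /l_rest[wu wRc wS].
  have -> : (if sel t u S1 S2 then u |: S1 else S1) :|:
            (if sel t u S1 S2 then S2 else u |: S2) = u |: (S1 :|: S2).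
    by case: (sel t u S1 S2); [rewrite setUA | rewrite setUCA].
  by rewrite in_setD in_setU1 negb_or wu wS wRc.
apply: IH inv_reject l_uniq _ => w /l_rest[wu wRc wS].
by rewrite in_setD wS in_setD1 wu wRc.
Qed.

Lemma half_value_le (rej S1 S2 P : {set T}) :
  {in rej, forall u, marg v u S1 <= c u * rho / B} -> cross_gain S1 S2 <= v S2 ->
  v (S1 :|: P :&: (rej :|: S1 :|: S2)) <=
    v S1 + v S2 + cost c (P :&: rej) * rho / B.
Proof.
move=> rejected cross; set Q := P :&: _.
have Q_rej y : y \in Q :\: S1 :\: S2 -> y \in P :&: rej.
  by rewrite !inE => /and3P[/negbTE-> /negbTE-> /andP[-> ]]; rewrite !orbF.
apply: le_trans (le_marg_sum v_submod S1 Q) _.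
rewrite -addrA lerD2l (big_setID S1) /= big1 ?add0r => [|y]; last first.
  by rewrite inE => /andP[_ /marg_mem].
rewrite (big_setID S2) /=; apply: lerD.
  apply: le_trans cross; rewrite /cross_gain.
  apply: (@le_trans _ _ (\sum_(y in (Q :\: S1) :&: S2) Num.max 0 (marg v y S1))).
    by apply: ler_sum => y _; rewrite le_max lexx orbT.
  by apply: ler_sum_subset => [|y _]; rewrite ?subsetIr // le_max lexx.
rewrite /cost !mulr_suml.
apply: (@le_trans _ _ (\sum_(y in Q :\: S1 :\: S2) c y * rho / B)).
  by apply: ler_sum => y /Q_rej; rewrite inE => /andP[_ /rejected].
apply: ler_sum_subset => [|y _]; first by apply/subsetP => y /Q_rej.
by rewrite divr_ge0 ?mulr_ge0 ?c_ge0 ?ltW.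
Qed.

Lemma round_value_le (R0 Rc S1 S2 : {set T}) p P :
  round_inv R0 Rc S1 S2 p ->
  v (P :&: ((R0 :\: Rc) :|: S1 :|: S2)) <=
    2 * (v S1 + v S2) + 2 * (cost c (P :&: (R0 :\: Rc)) * rho / B).
Proof.
case=> disj _ _ rejected c12 c21 _.
have h1 := half_value_le P (fun u hu => (rejected u hu).1) c12.
have h2 := half_value_le P (fun u hu => (rejected u hu).2) c21.
rewrite setUAC in h2.
have := submod_le_setU2 v_submod v_ge0 (P :&: ((R0 :\: Rc) :|: S1 :|: S2)) disj.
lra.
Qed.

End Round.

Lemma exit_step (T : finType) (X : nat -> {set T}) (u : T) m n :
  (m <= n)%N -> u \in X m -> u \notin X n ->
  exists2 t, (m < t <= n)%N & u \in X t.-1 :\: X t.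
Proof.
elim: n => [|n IH]; first by rewrite leqn0 => /eqP-> ->.
rewrite leq_eqVlt => /orP[/eqP-> -> //|mn] um un.
have [un'|un'] := boolP (u \in X n).
  by exists n.+1; rewrite ?mn ?ltnSn // inE un un'.
by have [t /andP[mt tn] ut] := IH mn um un'; exists t; rewrite ?mt ?(leqW tn).
Qed.

Section Run.
Variables (T : finType) (R : realFieldType) (v : {set T} -> R) (c : T -> R).
Variables (B alpha : R) (ord : seq T) (sel : nat -> T -> {set T} -> {set T} -> bool).
Variables (u0 : T) (M : nat) (Rs : nat -> {set T}) (ps : nat -> T -> R).
Variables (S1 S2 : nat -> {set T}) (rho : nat -> R).
Implicit Types (O : {set T}) (t : nat).
Hypotheses (v0 : v set0 = 0) (v_ge0 : forall S, 0 <= v S) (v_submod : submodular v).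
Hypotheses (c_ge0 : forall u, 0 <= c u) (B_gt0 : 0 < B) (alpha_gt1 : 1 < alpha).
Hypotheses (ord_uniq : uniq ord) (sel_max : argmax_selector v sel).
Hypotheses (Rs1 : Rs 1 = [set u | c u <= B]) (ps1 : ps 1 = fun _ => B).
Hypotheses (u0_max : forall u, u \in Rs 1 -> v [set u] <= v [set u0])
  (u0_Rs1 : u0 \in Rs 1).
Hypotheses (rho1 : rho 1 = v [set u0]) (S1_1 : S1 1 = [set u0]) (S2_1 : S2 1 = set0).
Hypotheses (M_ge2 : (2 <= M)%N)
  (rhoS : forall t, (2 <= t <= M)%N -> rho t = alpha * rho t.-1).
Hypothesis round_step : forall t, (2 <= t <= M)%N ->
  (Rs t, ps t, S1 t, S2 t) =
  proc v c B sel t (rho t) [seq u <- ord | u \in Rs t.-1 :\: (S1 t.-1 :|: S2 t.-1)]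
    (Rs t.-1, ps t.-1, set0, set0).
Hypothesis Rs_last : Rs M :\: (S1 M.-1 :|: S2 M.-1 :|: S1 M :|: S2 M) = set0.

Definition Rs_start t := if t is t'.+2 then Rs t'.+1 else Rs 1.

Definition dropped t := Rs_start t :\: Rs t.

Lemma rho_closed t : (1 <= t <= M)%N -> rho t = rho 1 * alpha ^+ t.-1.
Proof.
elim: t => [|[|t] IH] // /andP[_ tM]; first by rewrite expr0 mulr1.
by rewrite rhoS /= ?tM // IH ?(ltnW tM) // exprS mulrCA.
Qed.

Lemma rho_gt0 t : 0 < rho 1 -> (1 <= t <= M)%N -> 0 < rho t.
Proof.
move=> rho1_gt0 tM; rewrite rho_closed // mulr_gt0 // exprn_gt0 //.
exact: lt_trans ltr01 alpha_gt1.
Qed.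

Lemma rho_le_last t : 0 <= rho 1 -> (1 <= t <= M)%N -> rho t <= rho M.
Proof.
move=> rho1_ge0 tM; rewrite (rho_closed tM) (@rho_closed M) ?(ltnW M_ge2) ?leqnn //.
by rewrite ler_wpM2l // ler_eXn2l //; lia.
Qed.

Lemma run_round_inv : 0 < rho 1 -> forall t, (1 <= t <= M)%N ->
  round_inv v c B (rho t) (Rs_start t) (Rs t) (S1 t) (S2 t) (ps t).
Proof.
move=> rho1_gt0; elim=> [|[|t] IH] // tM.
  rewrite /= S1_1 S2_1; split.
  - by rewrite -setI_eq0 setI0.
  - by rewrite setU0 sub1set.
  - exact: subxx.
  - by move=> u; rewrite setDv inE.
  - by rewrite /cross_gain big_set0 v0.
  - by rewrite /cross_gain big_set1 /marg setU0 v0 subr0 ge_max v_ge0 lexx.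
  - by rewrite ps1 Rs1 => u; rewrite inE.
have inv := IH (ltnW tM); rewrite /Rs_start.
apply: (round_inv_proc v_submod c_ge0 B_gt0 (rho_gt0 rho1_gt0 tM) sel_max
  (round_inv_init _ _ v_ge0 (round_price inv)) (filter_uniq _ ord_uniq) _
  (esym (@round_step t.+2 tM))).
by move=> u; rewrite mem_filter setU0 setD0 => /andP[/setDP[]].
Qed.

Lemma run_cover O : O \subset Rs 1 ->
  O \subset \bigcup_(1 <= t < M.+1) (dropped t :|: S1 t :|: S2 t).
Proof.
move=> O_Rs1; apply/subsetP=> u uO.
have [uM|uM] := boolP (u \in Rs M).
  have : u \notin Rs M :\: (S1 M.-1 :|: S2 M.-1 :|: S1 M :|: S2 M).
    by rewrite Rs_last inE.
  rewrite in_setD uM andbT negbK -setUA => /setUP[u_prev|u_last].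
    by apply: (mem_bigcup_nat (t := M.-1)); [lia | rewrite -setUA in_setU u_prev orbT].
  by apply: (mem_bigcup_nat (t := M)); [lia | rewrite -setUA in_setU u_last orbT].
have [t /andP[t1 tM] ut] := exit_step (ltnW M_ge2) (subsetP O_Rs1 u uO) uM.
apply: (mem_bigcup_nat (t := t)); first lia.
suff : u \in dropped t by rewrite !in_setU => ->.
by case: t t1 tM ut => [|[|t]].
Qed.

Lemma run_dropped_cost O : 0 < rho 1 -> O \subset Rs 1 ->
  \sum_(1 <= t < M.+1) cost c (O :&: dropped t) <= cost c O.
Proof.
move=> rho1_gt0 O_Rs1.
have cost_split t : (2 <= t <= M)%N ->
    cost c (O :&: Rs t.-1) = cost c (O :&: Rs t) + cost c (O :&: dropped t).
  move=> tM; have := round_remaining (run_round_inv rho1_gt0 (t := t) _).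
  case: t tM => [|[|t]] // tM /(_ tM) Rs_sub; rewrite /dropped /= in Rs_sub *.
  by rewrite /cost (big_setID (Rs t.+2)) /= -setIA (setIidPr Rs_sub) -setIDA.
have cost_set0 : cost c set0 = 0 by rewrite /cost big_set0.
rewrite big_ltn ?ltnS ?(ltnW M_ge2) // /dropped setDv setI0 cost_set0 add0r.
rewrite (telescope_sumr_eq (fun t => - cost c (O :&: Rs t.-1))).
- rewrite /= (setIidPl O_Rs1) opprK.
  have : 0 <= cost c (O :&: Rs M) by apply: sumr_ge0.
  lra.
- lia.
- by move=> t tM; rewrite /= (cost_split t); [ring | lia].
Qed.

Lemma run_value_le O : cost c O <= B ->
  v O <= 2 * rho M + 2 * \sum_(1 <= t < M.+1) (v (S1 t) + v (S2 t)).
Proof.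
move=> O_B.
have O_Rs1 : O \subset Rs 1.
  apply/subsetP=> u uO; rewrite Rs1 inE (le_trans _ O_B) //.
  by rewrite /cost (bigD1 u) //= lerDl sumr_ge0.
have v_sum_ge0 : 0 <= \sum_(1 <= t < M.+1) (v (S1 t) + v (S2 t)).
  by apply: sumr_ge0 => t _; rewrite addr_ge0.
have rho1_ge0 : 0 <= rho 1 by rewrite rho1.
have rhoM_ge0 : 0 <= rho M.
  by apply: le_trans rho1_ge0 (rho_le_last rho1_ge0 _); rewrite /= ltnW.
(* For rho_1 = 0 the offered prices carry no information (x / 0 = 0), but
   then every singleton accepting the price B is worthless. *)
have [rho1_gt0|rho1_le0] := ltP 0 (rho 1); last first.
  apply: le_trans (value_le_sum_singletons v_submod v0 O) _.
  apply: le_trans (_ : 0 <= _); last by rewrite addr_ge0 ?mulr_ge0.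
  apply: sumr_le0 => u uO; apply: le_trans (u0_max (subsetP O_Rs1 u uO)) _.
  by rewrite -rho1.
rewrite -(setIidPl (run_cover O_Rs1)).
apply: le_trans (subadd_setI_bigcup v_submod v_ge0 v0 _ _ _ _) _.
apply: (@le_trans _ _ (\sum_(1 <= t < M.+1) (2 * (v (S1 t) + v (S2 t)) +
  2 * (cost c (O :&: dropped t) * rho M / B)))).
  apply: ler_sum_nat => t tM.
  apply: le_trans (round_value_le v_submod v_ge0 c_ge0 B_gt0 (rho_gt0 rho1_gt0 tM) O
    (run_round_inv rho1_gt0 tM)) _.
  rewrite lerD2l ler_pM2l //; apply: ler_wpM2r; first by rewrite invr_ge0 ltW.
  by apply: ler_wpM2l; [exact: sumr_ge0 | exact: rho_le_last].
rewrite big_split /= -!mulr_sumr -!mulr_suml.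
have : (\sum_(1 <= t < M.+1) cost c (O :&: dropped t)) * rho M / B <= rho M.
  rewrite ler_pdivrMr // mulrC ler_wpM2l //.
  exact: le_trans (run_dropped_cost rho1_gt0 O_Rs1) O_B.
lra.
Qed.

End Run.

Theorem lemma5p1 (T : finType) (R : realFieldType) (v : {set T} -> R)
  (c : T -> R) (B alpha : R) (ord : seq T)
  (sel : nat -> T -> {set T} -> {set T} -> bool) (u0 : T) (M : nat)
  (Rs : nat -> {set T}) (ps : nat -> T -> R) (S1 S2 : nat -> {set T})
  (rho : nat -> R) (O : {set T}) :
  v set0 = 0 ->
  (forall S, 0 <= v S) ->
  submodular v ->
  (forall u, 0 <= c u) ->
  0 < B -> 1 < alpha ->
  uniq ord -> (forall u, u \in ord) ->
  argmax_selector v sel ->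
  bfm_run v c B alpha ord sel u0 M Rs ps S1 S2 rho ->
  cost c O <= B ->
  (forall S, cost c S <= B -> v S <= v O) ->
  v O <= 2 * rho M + 2 * \sum_(1 <= t < M.+1) (v (S1 t) + v (S2 t)).
Proof.
move=> v0 v_ge0 v_submod c_ge0 B_gt0 alpha_gt1 ord_uniq _ sel_max run O_B _.
case: run => -[Rs1 ps1 u0_Rs1 u0_max] [[rho1 S1_1 S2_1]].
case=> M_ge2 rhoS round_step _ Rs_last.
exact: (run_value_le v0 v_ge0 v_submod c_ge0 B_gt0 alpha_gt1 ord_uniq sel_max
  Rs1 ps1 u0_max u0_Rs1 rho1 S1_1 S2_1 M_ge2 rhoS round_step Rs_last O_B).
Qed.
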